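(* Let $\varphi:X\to\mathbb R$ be Lipschitz continuous and let $u$ be a calibrated subaction of $\varphi$. If $\underline{x},\underline{z}\in\Omega_\varphi$ satisfy $H_\varphi(\underline{x},\underline{z})+H_\varphi(\underline{z},\underline{x})=0$, then \[H_\varphi(\underline{x},\underline{y})+u(\underline{x})=H_\varphi(\underline{z},\underline{y})+u(\underline{z})\quad\text{for every }\underline{y}\in X.\]
   Context: $X=[0,1]^{\mathbb N_0}$ with metric $d_X(\underline{x},\underline{y})=\sum_{i\ge0}|x_i-y_i|/2^{i+1}$ and shift $\sigma(\underline{x})_i=x_{i+1}$. $\alpha_\varphi=\inf_\mu\int\varphi\,d\mu$ over $\sigma$-invariant Borel probability measures. $B(\underline{x},\underline{y},n;\varepsilon)=\{\underline{z}: d_X(\underline{x},\underline{z})<\varepsilon,\ d_X(\sigma^n\underline{z},\underline{y})<\varepsilon\}$. Mañé potential $S_\varphi(\underline{x},\underline{y})=\lim_{\varepsilon\to0}\inf\{\sum_{i=0}^{n-1}(\varphi(\sigma^i\underline{z})-\alpha_\varphi): n\in\mathbb N,\ \underline{z}\in B(\underline{x},\underline{y},n;\varepsilon)\}$; Peierls barrier $H_\varphi(\underline{x},\underline{y})=\lim_{\varepsilon\to0}\liminf_{n\to\infty}\inf\{\sum_{i=0}^{n-1}(\varphi(\sigma^i\underline{z})-\alpha_\varphi): \underline{z}\in B(\underline{x},\underline{y},n;\varepsilon)\}\in\mathbb R\cup\{+\infty\}$; Aubry set $\Omega_\varphi=\{\underline{x}: S_\varphi(\underline{x},\underline{x})=0\}$.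 A subaction is a continuous $u$ with $u(\underline{x})+\varphi(\underline{x})\ge u(\sigma\underline{x})+\alpha_\varphi$ for all $\underline{x}$; it is calibrated if $\min_{\sigma(\underline{y})=\underline{x}}(\varphi(\underline{y})+u(\underline{y}))=u(\underline{x})+\alpha_\varphi$ for every $\underline{x}$. *)

From HB Require Import structures.
From mathcomp Require Import all_boot all_order all_algebra.
From mathcomp Require Import all_classical all_reals all_analysis.

Set Implicit Arguments.
Unset Strict Implicit.
Unset Printing Implicit Defensive.

Import Order.TTheory GRing.Theory Num.Theory.
Import numFieldNormedType.Exports.
Local Open Scope classical_set_scope.
Local Open Scope ring_scope.

Section Defs.
Variable R : realType.

Record X := MkX { seqX :> nat -> R ; seqX_in : forall i, 0 <= seqX i <= 1 }.

Lemma zero_in_unit : forall i : nat, 0 <= (fun _ : nat => (0 : R)) i <= 1.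
Proof. by move=> i; rewrite lexx ler01. Qed.

Definition X0 : X := @MkX (fun _ => 0) zero_in_unit.

HB.instance Definition _ := gen_eqMixin X.
HB.instance Definition _ := gen_choiceMixin X.
HB.instance Definition _ := isPointed.Build X X0.

Definition dX (x y : X) : R :=
  limn (fun n => \sum_(0 <= i < n) `|x i - y i| / 2 ^+ i.+1).

Lemma shift_in (x : X) : forall i, 0 <= (fun j => x j.+1) i <= 1.
Proof. by move=> i; exact: seqX_in. Qed.

Definition shift (x : X) : X := @MkX (fun j => x j.+1) (shift_in x).

Definition dX_open : set (set X) :=
  [set A | forall x, A x -> exists2 e : R, 0 < e & forall y, dX x y < e -> A y].

Definition XM := g_sigma_algebraType dX_open.

Definition shift_invariant (P : probability XM R) : Prop :=
  forall A : set XM, measurable A -> P (@shift @^-1` A) = P A.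

(* alpha_phi = inf_mu \int phi dmu  (a finite number, since phi is bounded
   and continuous and invariant measures exist) *)
Definition alpha (phi : X -> R) : R :=
  fine (ereal_inf [set r | exists P : probability XM R,
          shift_invariant P /\ r = (\int[P]_(x in setT) (phi x)%:E)%E]).

Definition Bset (x y : X) (n : nat) (eps : R) : set X :=
  [set z | dX x z < eps /\ dX (iter n shift z) y < eps].

Definition cost (phi : X -> R) (n : nat) (z : X) : R :=
  \sum_(0 <= i < n) (phi (iter i shift z) - alpha phi).

Definition Mane (phi : X -> R) (x y : X) : \bar R :=
  lim ((fun eps : R => ereal_inf [set r | exists n : nat, exists z : X,
          (0 < n)%N /\ Bset x y n eps z /\ r = (cost phi n z)%:E]) @ 0^'+).

Definition Peierls (phi : X -> R) (x y : X) : \bar R :=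
  lim ((fun eps : R => limn_einf (fun n : nat =>
          ereal_inf [set (cost phi n z)%:E | z in Bset x y n eps])) @ 0^'+).

Definition Aubry (phi : X -> R) : set X := [set x | Mane phi x x = 0%E].

Definition lipschitz_X (phi : X -> R) : Prop :=
  exists L : R, forall x y : X, `|phi x - phi y| <= L * dX x y.

Definition continuous_X (u : X -> R) : Prop :=
  forall x : X, forall e : R, 0 < e ->
    exists2 d : R, 0 < d & forall y : X, dX x y < d -> `|u x - u y| < e.

Definition subaction (phi u : X -> R) : Prop :=
  continuous_X u /\ forall x : X, u x + phi x >= u (shift x) + alpha phi.

Definition calibrated_subaction (phi u : X -> R) : Prop :=
  subaction phi u /\
  forall x : X,
    (exists2 y : X, shift y = x & phi y + u y = u x + alpha phi) /\
    (forall y : X, shift y = x -> u x + alpha phi <= phi y + u y).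

End Defs.

From Pilot Require Import Defs.
From mathcomp Require Import all_boot all_order all_algebra.
From mathcomp Require Import all_classical all_reals all_analysis.
From mathcomp Require Import lra.
Import Order.TTheory GRing.Theory Num.Theory.
Import numFieldNormedType.Exports.
Set Implicit Arguments.
Unset Strict Implicit.
Unset Printing Implicit Defensive.
Local Open Scope classical_set_scope.
Local Open Scope ring_scope.

(* Since u is a subaction, the cost of an orbit segment from near a to near b
   telescopes to at least u b - u a, up to the modulus of continuity of u; hence
   H(a, b) >= u b - u a. Gluing an orbit segment from near x to near z with one
   from near z to near y costs at most O(eps) extra, because phi is Lipschitz and
   d_X contracts by 1/2 along a common prefix; hence H(x, y) <= H(x, z) + H(z, y).
   Under H(x, z) + H(z, x) = 0 the two lower bounds force H(x, z) = u z - u x,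
   and the triangle inequalities through z and through x give both inequalities
   of the claim. *)

Section Metric.
Variable R : realType.
Implicit Types x y z w v : X R.
Local Notation sh := (@Defs.shift R).

Definition dX_partial (N : nat) x y : R :=
  \sum_(0 <= i < N) `|x i - y i| / 2 ^+ i.+1.

Lemma dXE x y : dX x y = limn (fun N => dX_partial N x y).
Proof. by []. Qed.

Lemma dX_partialS N x y :
  dX_partial N.+1 x y = `|x 0%N - y 0%N| / 2 + dX_partial N (sh x) (sh y) / 2.
Proof.
rewrite /dX_partial big_nat_recl //= mulr_suml; congr (_ + _).
by apply: eq_bigr => i _ /=; rewrite exprS invfM [2^-1 * _]mulrC mulrA.
Qed.

Lemma dX_partial_ge0 N x y : 0 <= dX_partial N x y.
Proof. by apply: sumr_ge0 => i _; rewrite divr_ge0 // exprn_ge0. Qed.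

Lemma dX_partial_le1 N x y : dX_partial N x y <= 1.
Proof.
elim: N x y => [|N IH] x y; first by rewrite /dX_partial big_geq.
have : `|x 0%N - y 0%N| <= 1.
  move: (seqX_in x 0) (seqX_in y 0) => /andP[? ?] /andP[? ?].
  by rewrite ler_norml; apply/andP; split; lra.
by rewrite dX_partialS; have := IH (sh x) (sh y); lra.
Qed.

Lemma is_cvg_dX_partial x y : cvgn (fun N => dX_partial N x y).
Proof.
apply: nondecreasing_is_cvgn; last by exists 1 => _ [N _ <-]; exact: dX_partial_le1.
move=> n m nm; rewrite /dX_partial (big_cat_nat (leq0n n) nm) /= lerDl.
by apply: sumr_ge0 => i _; rewrite divr_ge0 // exprn_ge0.
Qed.

Lemma dX_ge0 x y : 0 <= dX x y.
Proof.
rewrite dXE; apply: limr_ge; first exact: is_cvg_dX_partial.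
by apply: nearW => N; exact: dX_partial_ge0.
Qed.

Lemma dXC x y : dX x y = dX y x.
Proof.
rewrite !dXE; congr (limn _); apply/funext => N.
by apply: eq_bigr => i _; rewrite distrC.
Qed.

Lemma dX_triangle x y z : dX x z <= dX x y + dX y z.
Proof.
rewrite !dXE -limD; [|exact: is_cvg_dX_partial|exact: is_cvg_dX_partial].
apply: ler_lim; [exact: is_cvg_dX_partial|apply: is_cvgD; exact: is_cvg_dX_partial|].
apply: nearW => N.
change (dX_partial N x z <= dX_partial N x y + dX_partial N y z).
rewrite /dX_partial -big_split /=; apply: ler_sum => i _.
rewrite -mulrDl ler_wpM2r ?invr_ge0 ?exprn_ge0 //.
by rewrite (le_trans _ (ler_normD _ _)) // addrA subrK.
Qed.

Lemma dX_shift x y : dX x y = `|x 0%N - y 0%N| / 2 + dX (sh x) (sh y) / 2.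
Proof.
rewrite dXE; apply: cvg_lim => //; rewrite -cvg_shiftS /=.
under eq_fun do rewrite dX_partialS.
apply: cvgD; first exact: cvg_cst.
by apply: cvgM; [exact: is_cvg_dX_partial|exact: cvg_cst].
Qed.

Lemma X_ext x y : (forall i, x i = y i) -> x = y.
Proof.
case: x y => [f fP] [g gP] /= fg; have fgE : f = g by apply/funext.
by subst g; congr MkX; exact: Prop_irrelevance.
Qed.

Lemma iter_shiftE n w i : iter n sh w i = w (i + n)%N.
Proof. by elim: n i => [|n IH] i; rewrite ?addn0 // iterS /= IH addSnnS. Qed.

Lemma catX_subproof n w w' :
  forall i, 0 <= (fun i => if (i < n)%N then w i else w' (i - n)%N) i <= 1.
Proof. by move=> i /=; case: ifP => _; exact: seqX_in. Qed.

Definition catX n w w' : X R := MkX (catX_subproof n w w').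

Lemma catX_prefix n w w' i : (i < n)%N -> catX n w w' i = w i.
Proof. by move=> /= ->. Qed.

Lemma iter_shift_catX n w w' : iter n sh (catX n w w') = w'.
Proof.
by apply: X_ext => i; rewrite iter_shiftE /= ltnNge leq_addl /= addnK.
Qed.

Lemma dX_common_prefix n w v : (forall i, (i < n)%N -> w i = v i) ->
  dX w v = dX (iter n sh w) (iter n sh v) / 2 ^+ n.
Proof.
elim: n w v => [|n IH] w v wv; first by rewrite expr0 divr1.
rewrite dX_shift wv // subrr normr0 mul0r add0r (IH (sh w) (sh v)); last first.
  by move=> i ilt; apply: wv.
by rewrite -!iterSr -mulrA -invfM -exprSr.
Qed.

End Metric.

Lemma lipschitz_X_ge0 (R : realType) (phi : X R -> R) : lipschitz_X phi ->
  exists2 L : R, 0 <= L & forall a b, `|phi a - phi b| <= L * dX a b.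
Proof.
move=> [L phiL]; exists `|L| => // a b; apply: le_trans (phiL a b) _.
by rewrite ler_wpM2r ?dX_ge0 ?ler_norm.
Qed.

Section Cost.
Variables (R : realType) (phi : X R -> R).
Local Notation sh := (@Defs.shift R).

Lemma costS n v : cost phi n.+1 v = cost phi n v + (phi (iter n sh v) - alpha phi).
Proof. by rewrite /cost big_nat_recr. Qed.

Lemma costD n m v : cost phi (n + m) v = cost phi n v + cost phi m (iter n sh v).
Proof.
rewrite /cost (big_cat_nat (leq0n n) (leq_addr m n)) /=; congr (_ + _).
rewrite -{1}[n]add0n big_addn addnC addnK; apply: eq_bigr => i _.
by rewrite iterD.
Qed.

Lemma cost_ge_subaction (u : X R -> R) :
  (forall x, u (sh x) + alpha phi <= u x + phi x) ->
  forall n w, u (iter n sh w) - u w <= cost phi n w.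
Proof.
move=> u_sub; elim=> [|n IH] w; first by rewrite /cost big_geq // subrr.
by rewrite costS; have := u_sub (iter n sh w); have := IH w; rewrite iterS; lra.
Qed.

(* The Lipschitz errors along the common prefix form a geometric series of
   ratio 1/2, hence no factor n appears. *)
Lemma cost_le_common_prefix (L : R) : 0 <= L ->
  (forall a b, `|phi a - phi b| <= L * dX a b) ->
  forall n (w v : X R), (forall i, (i < n)%N -> w i = v i) ->
  cost phi n v <= cost phi n w + L * dX (iter n sh w) (iter n sh v).
Proof.
move=> L0 phiL; elim=> [|n IH] w v wv.
  by rewrite /cost !big_geq // add0r mulr_ge0 // dX_ge0.
have wvn : forall i, (i < n)%N -> w i = v i by move=> i /ltnW; exact: wv.
have double : dX (iter n.+1 sh w) (iter n.+1 sh v) = 2 * dX (iter n sh w) (iter n sh v).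
  rewrite (@dX_common_prefix _ 1%N (iter n sh w)) => [|[|//] _].
    by rewrite expr1 mulrC divfK.
  by rewrite !iter_shiftE wv.
have := IH _ _ wvn; have := phiL (iter n sh w) (iter n sh v).
rewrite !costS double mulrCA ler_norml => /andP[+ _]; lra.
Qed.

End Cost.

Section Liminf.
Variable R : realType.
Local Open Scope ereal_scope.
Implicit Types u v : (\bar R)^nat.

Lemma le_limn_einf u v : (forall n, u n <= v n) -> limn_einf u <= limn_einf v.
Proof.
move=> uv; rewrite !limn_einf_lim; apply: lee_lim; try exact: is_cvg_einfs.
apply: nearW => n; apply: le_ereal_inf_tmp => _ [k /= nk <-].
by apply: le_trans (uv k); apply: ereal_inf_lbound; exists k.
Qed.

Lemma limn_einf_ge u c : (forall n, c <= u n) -> c <= limn_einf u.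
Proof.
move=> cu; rewrite limn_einf_lim; apply: lime_ge; first exact: is_cvg_einfs.
by apply: nearW => n; apply: le_ereal_inf_tmp => _ [k /= _ <-].
Qed.

Lemma ereal_inf_le_limn_einf u : ereal_inf (range u) <= limn_einf u.
Proof. by apply: limn_einf_ge => n; apply: ereal_inf_lbound; exists n. Qed.

Lemma limn_einf_shiftn u k : limn_einf (fun n => u (n + k)%N) = limn_einf u.
Proof.
rewrite !limn_einf_lim.
have -> : einfs (fun n => u (n + k)%N) = (fun n => einfs u (n + k)%N).
  apply/funext => n; congr ereal_inf; apply/seteqP; split.
    by move=> _ [j nj <-]; exists (j + k)%N; rewrite //= leq_add2r.
  move=> _ [j /= nj <-]; have kj : (k <= j)%N by rewrite (leq_trans _ nj) ?leq_addl.
  by exists (j - k)%N; rewrite ?subnK //= -(leq_add2r k) subnK.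
by apply: cvg_lim => //; rewrite (cvg_shiftn k (einfs u)); exact: is_cvg_einfs.
Qed.

Lemma ge_fin_neqNy (c : R) x : c%:E <= x -> x != -oo.
Proof. by move=> cx; rewrite gt_eqF // (lt_le_trans _ cx) ?ltNyr. Qed.

Lemma le_ereal_inf_add (T1 T2 : Type) (A : set T1) (B : set T2)
    (f : T1 -> R) (g : T2 -> R) (c : \bar R) (K c1 c2 : R) :
  (forall a, A a -> (c1 <= f a)%R) -> (forall b, B b -> (c2 <= g b)%R) ->
  (forall a b, A a -> B b -> c <= (f a + g b + K)%:E) ->
  c <= ereal_inf [set (f a)%:E | a in A] + ereal_inf [set (g b)%:E | b in B] + K%:E.
Proof.
move=> c1f c2g cfg; set iA := ereal_inf _; set iB := ereal_inf _.
have /ge_fin_neqNy iANy : c1%:E <= iA.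
  by apply: le_ereal_inf_tmp => _ [a Aa <-]; rewrite lee_fin c1f.
have /ge_fin_neqNy iBNy : c2%:E <= iB.
  by apply: le_ereal_inf_tmp => _ [b Bb <-]; rewrite lee_fin c2g.
have [->|iAy] := eqVneq iA +oo; first by rewrite addye ?addye ?leey.
have [->|iBy] := eqVneq iB +oo; first by rewrite addey ?addye ?leey.
have iAf : iA \is a fin_num by rewrite fin_numE iANy iAy.
have iBf : iB \is a fin_num by rewrite fin_numE iBNy iBy.
apply/lee_addgt0Pr => e e0; have e20 : (0 < e / 2)%R by rewrite divr_gt0.
have [_ [a Aa <-] fa] := lb_ereal_inf_adherent e20 iAf.
have [_ [b Bb <-] gb] := lb_ereal_inf_adherent e20 iBf.
apply: le_trans (cfg _ _ Aa Bb) _.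
move: fa gb; rewrite -/iA -/iB -(fineK iAf) -(fineK iBf) -!EFinD !lte_fin lee_fin.
lra.
Qed.

Lemma limn_einf_concat_le (v1 v2 v3 : (\bar R)^nat) (K c2 c3 : R) :
  (forall n, c2%:E <= v2 n) -> (forall m, c3%:E <= v3 m) ->
  (forall n m, v1 (n.+1 + m)%N <= v2 n.+1 + v3 m + K%:E) ->
  limn_einf v1 <= limn_einf v2 + limn_einf v3 + K%:E.
Proof.
move=> c2v2 c3v3 v123; set l2 := limn_einf v2.
have /ge_fin_neqNy l2Ny : c2%:E <= l2 by exact: limn_einf_ge.
have /ge_fin_neqNy l3Ny : c3%:E <= limn_einf v3 by exact: limn_einf_ge.
have [->|l2y] := eqVneq l2 +oo; first by rewrite addye ?addye ?leey.
have l2f : l2 \is a fin_num by rewrite fin_numE l2Ny l2y.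
have v1_le m : limn_einf v1 <= l2 + (v3 m + K%:E).
  have [->|v3y] := eqVneq (v3 m) +oo; first by rewrite addye // addey ?leey.
  have v3f : v3 m + K%:E \is a fin_num.
    by rewrite fin_numD fin_numE v3y (ge_fin_neqNy (c3v3 m)).
  rewrite -(limn_einf_shiftn v1 m.+1) addeC -limn_einf_shift // /l2.
  rewrite -[X in _ <= X](limn_einf_shiftn _ 1); apply: le_limn_einf => n.
  by rewrite addnS -addSn addn1 addeC addeA; exact: v123.
rewrite -addeA addeC -!leeBlDr //.
apply: le_trans (ereal_inf_le_limn_einf v3); apply: le_ereal_inf_tmp => _ [m _ <-].
by rewrite !leeBlDr // addeC; exact: v1_le.
Qed.

End Liminf.

Section RightLimitNonincreasing.
Variables (R : realType) (F : R -> \bar R).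
Hypothesis F_nonincr : forall e1 e2 : R, 0 < e1 -> e1 <= e2 -> (F e2 <= F e1)%E.

Lemma lim_at_right0E : lim (F @ 0^'+) = ereal_sup (F @` `]0, +oo[).
Proof.
apply: cvg_lim => //; apply: nonincreasing_at_right_cvge => // a b.
by rewrite !in_itv /= !andbT => a0 _; exact: F_nonincr.
Qed.

Lemma le_lim_at_right0 e : 0 < e -> (F e <= lim (F @ 0^'+))%E.
Proof.
move=> e0; rewrite lim_at_right0E; apply: ereal_sup_ubound.
by exists e => //; rewrite /= in_itv /= andbT.
Qed.

Lemma lim_at_right0_le d c : 0 < d ->
  (forall e, 0 < e -> e < d -> (F e <= c)%E) -> (lim (F @ 0^'+) <= c)%E.
Proof.
move=> d0 Fc; rewrite lim_at_right0E; apply: ge_ereal_sup => _ [e /= + <-].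
rewrite in_itv /= andbT => e0; set e' := Num.min e (d / 2).
have e'0 : 0 < e' by rewrite lt_min e0 divr_gt0.
have e'e : e' <= e by rewrite ge_min lexx.
have e'd : e' < d by rewrite gt_min orbC ltr_pdivrMr //; lra.
exact: le_trans (F_nonincr e'0 e'e) (Fc _ e'0 e'd).
Qed.

End RightLimitNonincreasing.

Section Peierls.
Variables (R : realType) (phi : X R -> R) (L : R).
Hypothesis L_ge0 : 0 <= L.
Hypothesis phi_lip : forall a b : X R, `|phi a - phi b| <= L * dX a b.
Variable u : X R -> R.
Hypothesis u_cont : continuous_X u.
Local Notation sh := (@Defs.shift R).
Hypothesis u_sub : forall x : X R, u (sh x) + alpha phi <= u x + phi x.
Implicit Types a b x y z w : X R.

Definition min_cost a b eps n : \bar R :=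
  ereal_inf [set (cost phi n w)%:E | w in Bset a b n eps].

Definition peierls_eps a b eps : \bar R := limn_einf (min_cost a b eps).

Lemma PeierlsE a b : Peierls phi a b = lim (peierls_eps a b @ 0^'+).
Proof. by []. Qed.

Lemma peierls_eps_nonincr a b e1 e2 : 0 < e1 -> e1 <= e2 ->
  (peierls_eps a b e2 <= peierls_eps a b e1)%E.
Proof.
move=> _ e12; apply: le_limn_einf => n; apply: ereal_inf_le_tmp.
by move=> _ [w [aw wb] <-]; exists w => //; split; exact: lt_le_trans e12.
Qed.

Lemma catX_Bset_cost eps n m x z y w w' :
  Bset x z n.+1 eps w -> Bset z y m eps w' ->
  Bset x y (n.+1 + m) (2 * eps) (catX n.+1 w w') /\
  cost phi (n.+1 + m) (catX n.+1 w w') <= cost phi n.+1 w + cost phi m w' + 2 * L * eps.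
Proof.
move=> [xw wz] [zw' w'y]; set v := catX n.+1 w w'.
have wv : forall i, (i < n.+1)%N -> w i = v i by move=> i ilt; rewrite catX_prefix.
have tail : dX (iter n.+1 sh w) (iter n.+1 sh v) < 2 * eps.
  by rewrite iter_shift_catX; apply: le_lt_trans (dX_triangle _ z _) _; lra.
split; [split|].
- have : dX w v <= dX (iter n.+1 sh w) (iter n.+1 sh v) / 2.
    rewrite (dX_common_prefix wv) exprS invfM mulrA ler_piMr ?divr_ge0 ?dX_ge0 //.
    by rewrite invf_le1 ?exprn_gt0 // exprn_ege1 // ler1n.
  by have := dX_triangle x w v; lra.
- have eps0 : 0 < eps := le_lt_trans (dX_ge0 _ _) xw.
  by rewrite addnC iterD iter_shift_catX; lra.
- rewrite costD iter_shift_catX.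
  have := cost_le_common_prefix L_ge0 phi_lip wv.
  have : L * dX (iter n.+1 sh w) (iter n.+1 sh v) <= L * (2 * eps).
    by rewrite ler_wpM2l // ltW.
  lra.
Qed.

Lemma cost_ge_u_diff a b (delta : R) : 0 < delta -> exists2 d : R, 0 < d &
  forall eps n w, eps <= d -> Bset a b n eps w -> u b - u a - delta <= cost phi n w.
Proof.
move=> delta0; have delta20 : 0 < delta / 2 by rewrite divr_gt0.
have [da da0 ua] := u_cont a delta20; have [db db0 ub] := u_cont b delta20.
exists (Num.min da db) => [|eps n w]; first by rewrite lt_min da0 db0.
rewrite le_min => /andP[eda edb] [aw wb].
have := ua w (lt_le_trans aw eda).
have := ub (iter n sh w); rewrite dXC => /(_ (lt_le_trans wb edb)).
have := cost_ge_subaction u_sub n w.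
rewrite !ltr_norml; lra.
Qed.

Lemma Peierls_ge_u_diff a b : ((u b - u a)%:E <= Peierls phi a b)%E.
Proof.
apply/lee_subgt0Pr => e e0; have [d d0 costd] := cost_ge_u_diff a b e0.
rewrite PeierlsE; apply: le_trans (le_lim_at_right0 (@peierls_eps_nonincr a b) d0).
apply: limn_einf_ge => n; apply: le_ereal_inf_tmp => _ [w abw <-].
by rewrite -EFinB lee_fin (costd d).
Qed.

Lemma min_cost_concat_le x z y eps n m c1 c2 :
  (forall w, Bset x z n.+1 eps w -> c1 <= cost phi n.+1 w) ->
  (forall w, Bset z y m eps w -> c2 <= cost phi m w) ->
  (min_cost x y (2 * eps) (n.+1 + m) <=
   min_cost x z eps n.+1 + min_cost z y eps m + (2 * L * eps)%:E)%E.
Proof.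
move=> c1xz c2zy; apply: (le_ereal_inf_add c1xz c2zy) => w w' xzw zyw'.
have [xyv costv] := catX_Bset_cost xzw zyw'.
apply: le_trans (ereal_inf_lbound _) _; first by exists (catX n.+1 w w').
by rewrite lee_fin.
Qed.

Lemma peierls_eps_triangle x z y eps c1 c2 :
  (forall n w, Bset x z n eps w -> c1 <= cost phi n w) ->
  (forall n w, Bset z y n eps w -> c2 <= cost phi n w) ->
  (peierls_eps x y (2 * eps) <=
   peierls_eps x z eps + peierls_eps z y eps + (2 * L * eps)%:E)%E.
Proof.
move=> c1xz c2zy; apply: (@limn_einf_concat_le _ _ _ _ _ c1 c2).
- by move=> n; apply: le_ereal_inf_tmp => _ [w xzw <-]; rewrite lee_fin c1xz.
- by move=> n; apply: le_ereal_inf_tmp => _ [w zyw <-]; rewrite lee_fin c2zy.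
- by move=> n m; apply: min_cost_concat_le; [exact: c1xz|exact: c2zy].
Qed.

Lemma Peierls_triangle x z y :
  (Peierls phi x y <= Peierls phi x z + Peierls phi z y)%E.
Proof.
have [d1 d10 costxz] := cost_ge_u_diff x z ltr01.
have [d2 d20 costzy] := cost_ge_u_diff z y ltr01.
have d0 : 0 < Num.min d1 d2 by rewrite lt_min d10 d20.
rewrite PeierlsE; apply: (lim_at_right0_le (@peierls_eps_nonincr x y) d0) => e e0.
rewrite lt_min => /andP[ed1 ed2]; apply/lee_addgt0Pr => r r0.
have L1 : 0 < 2 * L + 1 by have := L_ge0; lra.
set t := Num.min (e / 2) (r / (2 * L + 1)).
have t0 : 0 < t by rewrite lt_min !divr_gt0.
have te : t <= e / 2 by rewrite ge_min lexx.
have tr : t * (2 * L + 1) <= r by rewrite -ler_pdivlMr // ge_min lexx orbT.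
have t20 : 0 < 2 * t by lra.
have t2e : 2 * t <= e by lra.
apply: le_trans (peierls_eps_nonincr x y t20 t2e) _.
apply: le_trans (@peierls_eps_triangle x z y t (u z - u x - 1) (u y - u z - 1) _ _) _.
- by move=> n w; apply: costxz; lra.
- by move=> n w; apply: costzy; lra.
apply: leeD; last by rewrite lee_fin; lra.
apply: leeD; rewrite PeierlsE; apply: le_lim_at_right0 t0.
all: exact: peierls_eps_nonincr.
Qed.

Lemma Peierls_eq_u_diff x z : (Peierls phi x z + Peierls phi z x = 0)%E ->
  Peierls phi x z = (u z - u x)%:E.
Proof.
have := Peierls_ge_u_diff x z; have := Peierls_ge_u_diff z x.
case: (Peierls phi x z) => [p| |]; case: (Peierls phi z x) => [q| |] //=.
by rewrite !lee_fin => uq up /eqP; rewrite -EFinD eqe => /eqP pq; congr EFin; lra.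
Qed.

Lemma Peierls_add_u_le x z y : Peierls phi x z = (u z - u x)%:E ->
  (Peierls phi x y + (u x)%:E <= Peierls phi z y + (u z)%:E)%E.
Proof.
move=> xzE; have := Peierls_triangle x z y; rewrite xzE.
case: (Peierls phi x y) => [p| |]; case: (Peierls phi z y) => [q| |] //=;
  rewrite ?leey ?leNye //.
by rewrite -!EFinD !lee_fin; lra.
Qed.

End Peierls.

Theorem theorem2p14 (R : realType) (phi : X R -> R) (u : X R -> R)
  (x z : X R) :
  lipschitz_X phi ->
  calibrated_subaction phi u ->
  x \in Aubry phi -> z \in Aubry phi ->
  (Peierls phi x z + Peierls phi z x = 0)%E ->
  forall y : X R,
    (Peierls phi x y + (u x)%:E = Peierls phi z y + (u z)%:E)%E.
Proof.
move=> /lipschitz_X_ge0[L L0 phiL] [[u_cont u_sub] _] _ _ xzx y.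
have zxz : (Peierls phi z x + Peierls phi x z = 0)%E by rewrite addeC.
apply/le_anti/andP; split; apply: (Peierls_add_u_le L0 phiL u_cont u_sub).
- exact: Peierls_eq_u_diff u_cont u_sub _ _ xzx.
- exact: Peierls_eq_u_diff u_cont u_sub _ _ zxz.
Qed.
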